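(* Let $a\geq 1$ and $b\geq 1$ be integers. For Lebesgue-almost every $x\in\Lambda^{a+b}$ we have $\lim_{k\to\infty}T_{a,b}^k(x)=(x_1^{\infty},\ldots,x_{a+b}^{\infty})$ with $x_1^{\infty}=x_2^{\infty}=\cdots=x_{a+1}^{\infty}=0$.
   Context: For $n\geq 1$ let $\Lambda^n=\{x\in\mathbb{R}^n : 0\leq x_1\leq\cdots\leq x_n\}$. For integers $a,b\geq 1$ the map $T_{a,b}:\Lambda^{a+b}\to\Lambda^{a+b}$ sends $x$ to the vector obtained by arranging $x_1,\ldots,x_a,\,x_{a+1}-x_a,\ldots,x_{a+b}-x_a$ in nondecreasing order. *)

From HB Require Import structures.
From mathcomp Require Import all_boot all_order all_algebra.
From mathcomp Require Import all_classical all_reals topology normedtype sequences.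
Set Implicit Arguments. Unset Strict Implicit. Unset Printing Implicit Defensive.
Import Order.TTheory GRing.Theory Num.Theory.
Import numFieldTopology.Exports numFieldNormedType.Exports.
Local Open Scope ring_scope.

(* Vectors of R^n are functions 'I_n -> R; coordinate x_{k+1} of the paper is x k. *)

Definition Lambda (R : realType) (n : nat) (x : 'I_n -> R) : Prop :=
  (forall i : 'I_n, 0 <= x i) /\ (forall i j : 'I_n, (i <= j)%N -> x i <= x j).

(* coordinate with index given as a nat (0-based); 0 if out of range *)
Definition coord (R : realType) (n : nat) (x : 'I_n -> R) (k : nat) : R :=
  nth 0 [seq x j | j <- enum 'I_n] k.

(* T_{a,b}: arrange x_1..x_a, x_{a+1}-x_a, ..., x_{a+b}-x_a in nondecreasing order.
   (0-based: entries j < a are kept, entries j >= a get x_{a-1} subtracted.) *)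
Definition Tab (R : realType) (a b : nat) (x : 'I_(a + b) -> R) : 'I_(a + b) -> R :=
  let s := [seq (if (j < a)%N then x j else x j - coord x a.-1) | j : 'I_(a + b) <- enum 'I_(a + b)] in
  fun i => nth 0 (sort (fun u v : R => u <= v) s) i.

Definition lebesgue_null (R : realType) (n : nat) (N : ('I_n -> R) -> Prop) : Prop :=
  forall eps : R, 0 < eps ->
    exists (l u : nat -> 'I_n -> R),
      (forall m i, l m i <= u m i) /\
      (forall x, N x -> exists m, forall i, l m i <= x i <= u m i) /\
      (forall M : nat, \sum_(m < M) \prod_(i < n) (u m i - l m i) <= eps).

(** Call [x_a] the pivot.  Every coordinate of [T^k x] is nonincreasing in [k], and
    one step of [T] lowers the coordinate sum by the pivot, so along the orbit the
    pivot drops below every positive level.  If the pivot never vanishes, the limit [l]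
    of coordinate [a + 1] is [0]: once the pivot is below [l] it is never moved again,
    yet it stays positive.  Coordinates [1 .. a + 1] lie below coordinate [a + 1], so
    they tend to [0] as well.
    If the pivot vanishes at step [k], then [T^k x = M x] for an invertible integer
    matrix [M] (each step of [T] is a shear followed by a permutation), and the pivot
    row of [M] puts [x] on a hyperplane with integer normal.  Bounded pieces of
    hyperplanes are null, and there are countably many such pieces. *)

From Pilot Require Import Defs.
From HB Require Import structures.
From mathcomp Require Import all_boot all_order all_algebra.
From mathcomp Require Import all_classical all_reals topology normedtype sequences.
From mathcomp Require Import zify ring lra fingroup perm.
From Stdlib Require Import Cantor.
Import Order.TTheory GRing.Theory Num.Theory.
Import numFieldTopology.Exports numFieldNormedType.Exports.
Set Implicit Arguments. Unset Strict Implicit. Unset Printing Implicit Defensive.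
Local Open Scope classical_set_scope.
Local Open Scope ring_scope.

Lemma sorted_nth_downclosed d (T : porderType d) (x0 : T) (p : pred T) (t : seq T) :
  (forall y z, (z <= y)%O -> p y -> p z) -> sorted <=%O t ->
  forall i, (i < size t)%N -> p (nth x0 t i) = (i < count p t)%N.
Proof.
move=> p_dw; elim: t => [//|x t IH] st.
have x_min : all (<=%O x) t by apply: order_path_min => //; exact: le_trans.
have p_x : ~~ p x -> count p t = 0%N.
  move=> npx; apply/eqP; rewrite -leqn0 leqNgt -has_count; apply/hasPn => y yt.
  by apply: contra npx; apply: p_dw; move/allP: x_min; apply.
case=> [|i] /=; first by case: (boolP (p x)) => // /p_x ->.
rewrite ltnS => lti; case: (boolP (p x)) => [_|/[dup] /p_x -> npx].
  by rewrite IH ?(path_sorted st).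
apply/negbTE; apply: contra npx; apply: p_dw.
by move/allP: x_min; apply; exact: mem_nth.
Qed.

Lemma count_ord_lt n m : count (fun j : 'I_n => (j < m)%N) (enum 'I_n) = minn m n.
Proof.
rewrite -(count_map val (fun k => (k < m)%N)) val_enum_ord.
elim: n => [|n IH]; first by rewrite minn0.
rewrite -addn1 iotaD count_cat IH /= add0n addn0; case: ltnP => ?; lia.
Qed.

Lemma unitmx_row_neq0 n (M : 'M[int]_n) (r : 'I_n) :
  M \in unitmx -> exists j, M r j != 0.
Proof.
move=> Mu; apply/existsP; apply: contraLR isT => /existsPn M_r0.
have := congr1 (fun A : 'M[int]_n => A r r) (mulmxV Mu).
rewrite !mxE eqxx big1 // => j _.
by move/negbNE/eqP: (M_r0 j) => ->; rewrite mul0r.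
Qed.

Section IntMatrixAction.
Variables (R : realType) (n : nat).

Definition intmx_app (M : 'M[int]_n) (x : 'I_n -> R) (i : 'I_n) : R :=
  \sum_j (M i j)%:~R * x j.

Lemma intmx_app1 x : intmx_app 1%:M x = x.
Proof.
apply/funext => i; rewrite /intmx_app (bigD1 i) //= mxE eqxx mul1r big1 ?addr0 //.
by move=> j; rewrite mxE eq_sym => /negbTE ->; rewrite mul0r.
Qed.

Lemma intmx_appM M N x : intmx_app (M *m N) x = intmx_app M (intmx_app N x).
Proof.
apply/funext => i; rewrite /intmx_app.
under eq_bigr do rewrite mxE rmorph_sum /= mulr_suml.
rewrite exchange_big /=; apply: eq_bigr => j _.
by rewrite mulr_sumr; apply: eq_bigr => k _; rewrite intrM mulrA.
Qed.

Lemma intmx_app_row_perm (s : 'S_n) M x i :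
  intmx_app (row_perm s M) x i = intmx_app M x (s i).
Proof. by apply: eq_bigr => j _; rewrite mxE. Qed.

End IntMatrixAction.

Section Tab.
Variables (R : realType) (a b : nat).
Implicit Types x : 'I_(a + b) -> R.

Definition Tab_unsorted x (j : 'I_(a + b)) : R :=
  if (j < a)%N then x j else x j - Defs.coord x a.-1.

Lemma Tab_perm x : exists s : 'S_(a + b), forall i, Tab x i = Tab_unsorted x (s i).
Proof.
have /tuple_permP[s Es] : perm_eq (sort <=%R [seq Tab_unsorted x j | j <- enum 'I_(a + b)])
                                   [tuple Tab_unsorted x j | j < a + b].
  by rewrite perm_sort perm_refl.
by exists s => i; rewrite /Tab /= Es -(tnth_nth 0) !tnth_mktuple.
Qed.

Lemma Tab_sorted x (i j : 'I_(a + b)) : (i <= j)%N -> Tab x i <= Tab x j.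
Proof.
move=> le_ij; rewrite /Tab /=; apply: (sorted_leq_nth le_trans lexx) => //.
- by apply: sort_sorted; exact: le_total.
- by rewrite inE size_sort size_map size_enum_ord.
- by rewrite inE size_sort size_map size_enum_ord.
Qed.

Lemma Tab_count x (p : pred R) : (forall y z, z <= y -> p y -> p z) ->
  forall i : 'I_(a + b),
  p (Tab x i) = (i < count (p \o Tab_unsorted x) (enum 'I_(a + b)))%N.
Proof.
move=> p_dw i; rewrite /Tab /= sorted_nth_downclosed //.
- by rewrite count_sort count_map.
- by apply: sort_sorted; exact: le_total.
- by rewrite size_sort size_map size_enum_ord.
Qed.

Variable u : 'I_(a + b).
Hypothesis u_val : val u = a.-1.
Hypothesis a_gt0 : (0 < a)%N.

Lemma Tab_unsortedE x j : Tab_unsorted x j = if (j < a)%N then x j else x j - x u.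
Proof.
rewrite /Tab_unsorted /Defs.coord -u_val (nth_map u) ?size_enum_ord ?ltn_ord //.
by congr (if _ then _ else _ - x _); apply: val_inj; rewrite /= nth_enum_ord.
Qed.

Definition Tab_shear : 'M[int]_(a + b) :=
  \matrix_(r, q) ((r == q)%:R - ((a <= r)%N && (q == u))%:R).

Lemma Tab_shear_unit : Tab_shear \in unitmx.
Proof.
have u_lt_a (r : 'I_(a + b)) : r = u -> (a <= r)%N = false by move=> ->; rewrite u_val; lia.
rewrite unitmxE det_trig.
  rewrite big1 ?unitr1 // => i _; rewrite mxE eqxx.
  by case: eqP => [/u_lt_a ->|]; rewrite ?andbF subr0.
apply/is_trig_mxP => i j lt_ij; rewrite mxE -val_eqE (ltn_eqF lt_ij).
case: eqP => [ju|]; rewrite ?andbF ?subrr //.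
have i_lt_a : (i < a)%N by move: lt_ij; rewrite ju u_val; lia.
by rewrite leqNgt i_lt_a subrr.
Qed.

Lemma Tab_unsorted_intmx x : Tab_unsorted x = intmx_app Tab_shear x.
Proof.
apply/funext => j; rewrite Tab_unsortedE /intmx_app.
under eq_bigr do rewrite mxE rmorphB /= mulrBl.
rewrite sumrB (bigD1 j) //= eqxx big1 ?addr0; last first.
  by move=> q /negbTE; rewrite eq_sym => ->; rewrite mul0r.
rewrite (bigD1 u) //= eqxx andbT big1 ?addr0; last by move=> q /negbTE ->; rewrite andbF mul0r.
by case: ltnP => _ /=; rewrite ?mul0r ?subr0 mul1r // mul1r.
Qed.

Lemma Tab_intmx M x : exists s : 'S_(a + b),
  Tab (intmx_app M x) = intmx_app (row_perm s (Tab_shear *m M)) x.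
Proof.
have [s Es] := Tab_perm (intmx_app M x); exists s; apply/funext => i.
by rewrite Es intmx_app_row_perm intmx_appM -Tab_unsorted_intmx.
Qed.

Lemma Tab_Lambda x : Lambda x -> Lambda (Tab x).
Proof.
move=> [x_ge0 x_mono]; split; last exact: Tab_sorted.
move=> i; have [s ->] := Tab_perm x; rewrite Tab_unsortedE.
case: ifP => [_|/negbT]; first exact: x_ge0.
by rewrite -leqNgt subr_ge0 => le_a; apply: x_mono; rewrite u_val; lia.
Qed.

Lemma Tab_le x : Lambda x -> forall i, Tab x i <= x i.
Proof.
move=> [x_ge0 x_mono] i.
rewrite (Tab_count _ (p := <=%R^~ (x i))); last by move=> y z /le_trans; apply.
apply: (@leq_trans (count (fun j : 'I_(a + b) => (j < i.+1)%N) (enum 'I_(a + b)))).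
  by rewrite count_ord_lt (minn_idPl (ltn_ord i)).
apply: sub_count => j /= lt_ji; rewrite Tab_unsortedE.
have le_xji : x j <= x i by apply: x_mono.
by case: ifP => // _; rewrite lerBlDr (le_trans le_xji) // lerDl.
Qed.

Variable v : 'I_(a + b).
Hypothesis v_val : val v = a.

Lemma sum_Tab_le x : Lambda x -> \sum_i Tab x i <= \sum_i x i - x u.
Proof.
move=> [x_ge0 _]; have [s Es] := Tab_perm x.
have -> : \sum_i Tab x i = \sum_i Tab_unsorted x i.
  by rewrite [RHS](reindex_inj (@perm_inj _ s)); apply: eq_bigr => i _.
rewrite (bigD1 v) //= [X in _ <= X - _](bigD1 v) //= Tab_unsortedE v_val ltnn.
suff : \sum_(i | i != v) Tab_unsorted x i <= \sum_(i | i != v) x i by lra.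
by apply: ler_sum => i _; rewrite Tab_unsortedE; case: ifP => // _; rewrite lerBlDr lerDl.
Qed.

Lemma Tab_pivot_fixed x c : Lambda x -> x u < c -> c <= Tab x v -> Tab x u = x u.
Proof.
move=> [x_ge0 x_mono] lt_uc le_cv.
apply/eqP; rewrite eq_le Tab_le //= leNgt; apply/negP => lt_Tu.
(* At most [a] entries are below [c], and the [a] head entries are; so only head
   entries can be below [x u], and at most [a - 1] of them are. *)
pose head := fun j : 'I_(a + b) => (j < a)%N.
pose below y := fun j : 'I_(a + b) => Tab_unsorted x j < y.
have below_dw y : forall z t : R, t <= z -> z < y -> t < y.
  by move=> z t le_tz; exact: le_lt_trans.
have few_below_c : (count (below c) (enum 'I_(a + b)) <= a)%N.
  by move: le_cv; rewrite leNgt (Tab_count _ (below_dw c)) v_val -leqNgt.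
have many_below_u : (a.-1 < count (below (x u)) (enum 'I_(a + b)))%N.
  by move: lt_Tu; rewrite (Tab_count _ (below_dw (x u))) u_val.
have head_below_c : (count (predU head (below (x u))) (enum 'I_(a + b))
                      <= count (below c) (enum 'I_(a + b)))%N.
  apply: sub_count => j /orP[|/lt_trans]; last exact.
  rewrite /head /below Tab_unsortedE => j_head; rewrite j_head (le_lt_trans _ lt_uc) //.
  by apply: x_mono; rewrite u_val; lia.
have count_head : count head (enum 'I_(a + b)) = a by rewrite count_ord_lt; lia.
have head_below_u : (count (predI head (below (x u))) (enum 'I_(a + b)) <= a.-1)%N.
  have /minn_idPl le_a : (a.-1 <= a + b)%N by lia.
  rewrite -[X in (_ <= X)%N]le_a -count_ord_lt.
  apply: sub_count => j /andP[]; rewrite /head /below Tab_unsortedE => j_head.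
  rewrite j_head.
  by apply: contraLR; rewrite -leqNgt -u_val -leNgt; exact: x_mono.
have := count_predUI head (below (x u)) (enum 'I_(a + b)); lia.
Qed.

End Tab.

Section Iterates.
Variables (R : realType) (a b : nat) (u v : 'I_(a + b)).
Hypotheses (u_val : val u = a.-1) (v_val : val v = a) (a_gt0 : (0 < a)%N).
Variable x : 'I_(a + b) -> R.

Local Notation X k := (iter k (@Tab R a b) x).

Lemma iter_Tab_intmx k : exists2 M, M \in unitmx & X k = intmx_app M x.
Proof.
elim: k => [|k [M M_unit IHk]] /=; first by exists 1%:M; rewrite ?unitmx1 ?intmx_app1.
rewrite IHk; have [s ->] := Tab_intmx u_val M x; exists (row_perm s (Tab_shear u *m M)) => //.
by rewrite row_permE !unitmx_mul unitmx_perm Tab_shear_unit.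
Qed.

Hypothesis x_Lambda : Lambda x.

Lemma iter_Tab_Lambda k : Lambda (X k).
Proof. by elim: k => [|k IHk] //=; exact: (Tab_Lambda u_val). Qed.

Lemma iter_Tab_ge0 k i : 0 <= X k i.
Proof. by case: (iter_Tab_Lambda k) => + _; apply. Qed.

Lemma iter_Tab_nonincreasing i :
  {homo (fun k => X k i) : m n / (m <= n)%N >-> n <= m}.
Proof.
move=> m n /subnK <-; elim: (n - m)%N => [|d IHd] //=.
by apply: le_trans IHd; apply: (Tab_le u_val); exact: iter_Tab_Lambda.
Qed.

Lemma iter_Tab_cvg i : cvgn (fun k => X k i).
Proof.
apply/cvg_ex; exists (inf (range (fun k => X k i))).
apply: nonincreasing_cvgn; first exact: iter_Tab_nonincreasing.
by exists 0 => _ [k _ <-]; exact: iter_Tab_ge0.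
Qed.

Lemma iter_Tab_pivot_lt K m : 0 < m -> exists2 k, (K <= k)%N & X k u < m.
Proof.
move=> m_gt0; apply: contrapT => no_k.
have pivot_ge k : (K <= k)%N -> m <= X k u.
  by move=> le_Kk; rewrite leNgt; apply/negP => lt_km; apply: no_k; exists k.
pose S k := \sum_i X k i.
have S_ge0 k : 0 <= S k by apply: sumr_ge0 => i _; exact: iter_Tab_ge0.
have S_decr N : S (K + N)%N <= S K - N%:R * m.
  elim: N => [|N IHN]; first by rewrite addn0 mul0r subr0.
  have le_mu := pivot_ge (K + N)%N (leq_addr _ _).
  have step : S (K + N).+1 <= S (K + N)%N - X (K + N)%N u.
    by rewrite /S iterS; exact: (sum_Tab_le u_val v_val (iter_Tab_Lambda _)).
  by rewrite addnS -natr1 mulrDl mul1r; lra.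
pose N := (Num.truncn (S K / m)).+1.
have : S K < N%:R * m by rewrite -ltr_pdivrMr // truncnS_gt.
by have := S_decr N; have := S_ge0 (K + N)%N; lra.
Qed.

Hypothesis pivot_neq0 : forall k, X k u != 0.

Lemma limn_iter_Tab_next : limn (fun k => X k v) = 0.
Proof.
set l := limn _; have l_le k : l <= X k v.
  by apply: nonincreasing_cvgn_ge; [exact: iter_Tab_nonincreasing|exact: iter_Tab_cvg].
have l_ge0 : 0 <= l.
  by apply: limr_ge; [exact: iter_Tab_cvg|apply: nearW => k; exact: iter_Tab_ge0].
apply/eqP; rewrite eq_le l_ge0 andbT leNgt; apply/negP => l_gt0.
have [k0 _ lt_k0l] := iter_Tab_pivot_lt 0 l_gt0.
have frozen N : X (k0 + N)%N u = X k0 u.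
  elim: N => [|N IHN]; first by rewrite addn0.
  rewrite addnS /= (Tab_pivot_fixed u_val a_gt0 v_val (c := l)) ?IHN //.
    exact: iter_Tab_Lambda.
  exact: (l_le (k0 + N).+1).
have pivot_gt0 : 0 < X k0 u by rewrite lt0r pivot_neq0 iter_Tab_ge0.
have [k le_k0k] := iter_Tab_pivot_lt k0 pivot_gt0.
by rewrite -(subnKC le_k0k) frozen ltxx.
Qed.

Lemma cvg_iter_Tab : exists y : 'I_(a + b) -> R,
  (forall i, (fun k => X k i) @ \oo --> y i) /\ (forall i : 'I_(a + b), (i <= a)%N -> y i = 0).
Proof.
exists (fun i => limn (fun k => X k i)); split => [i|i le_ia]; first exact: iter_Tab_cvg.
apply/eqP; rewrite eq_le; apply/andP; split.
  rewrite -[Y in _ <= Y]limn_iter_Tab_next.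
  apply: limr_ge; first exact: iter_Tab_cvg.
  apply: nearW => k; apply: le_trans (nonincreasing_cvgn_ge _ _ k) _.
  - exact: iter_Tab_nonincreasing.
  - exact: iter_Tab_cvg.
  - by case: (iter_Tab_Lambda k) => _; apply; rewrite v_val.
by apply: limr_ge; [exact: iter_Tab_cvg|apply: nearW => k; exact: iter_Tab_ge0].
Qed.

End Iterates.

Section RealSums.
Variable R : realType.

Lemma ler_sum_ord_supp (F : nat -> R) (C M : nat) :
  (forall m, 0 <= F m) -> (forall m, (C <= m)%N -> F m = 0) ->
  \sum_(m < M) F m <= \sum_(m < C) F m.
Proof.
move=> F_ge0 F_supp; rewrite -!(big_mkord xpredT).
case: (leqP M C) => [le_MC|lt_CM].
  by rewrite (big_cat_nat _ le_MC) //= lerDl sumr_ge0.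
rewrite (big_cat_nat _ (ltnW lt_CM)) //= [X in _ + X]big1_seq ?addr0 //.
by move=> m /andP[_]; rewrite mem_index_iota => /andP[le_Cm _]; exact: F_supp.
Qed.

Lemma ler_sum_uniq_subset (I : eqType) (s t : seq I) (F : I -> R) :
  uniq s -> uniq t -> {subset s <= t} -> (forall i, 0 <= F i) ->
  \sum_(i <- s) F i <= \sum_(i <- t) F i.
Proof.
move=> s_uniq t_uniq sub_st F_ge0.
rewrite -(perm_big _ (permEl (perm_filterC (mem s) t))) big_cat /=.
have perm_s : perm_eq s [seq i <- t | i \in s].
  apply: uniq_perm => //; first exact: filter_uniq.
  by move=> i; rewrite mem_filter andb_idr //; exact: sub_st.
by rewrite (perm_big _ perm_s) lerDl sumr_ge0.
Qed.

Lemma sum_cantor_le (F : nat * nat -> R) (M : nat) : (forall z, 0 <= F z) ->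
  \sum_(0 <= m < M) F (of_nat m) <= \sum_(0 <= p < M) \sum_(0 <= q < M) F (p, q).
Proof.
move=> F_ge0; rewrite -(big_map of_nat xpredT F) -big_allpairs.
apply: ler_sum_uniq_subset => //.
- by rewrite map_inj_uniq ?iota_uniq //; exact: can_inj cancel_to_of.
- by rewrite allpairs_uniq ?iota_uniq // => -[p1 q1] [p2 q2] _ _ [-> ->].
- move=> z /mapP[m]; rewrite mem_iota add0n => lt_mM ->.
  have := to_nat_non_decreasing (of_nat m).1 (of_nat m).2.
  rewrite -surjective_pairing cancel_to_of => le_m.
  by rewrite [of_nat m]surjective_pairing allpairs_f // mem_iota; apply/andP; split => //; lia.
Qed.

Lemma sum_inv_pow2 (M : nat) : \sum_(p < M) ((2 : R) ^+ p.+1)^-1 = 1 - ((2 : R) ^+ M)^-1.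
Proof.
elim: M => [|M IHM]; first by rewrite big_ord0 expr0 invr1 subrr.
have pow2_neq0 : (2 : R) ^+ M != 0 by rewrite expf_neq0 // pnatr_eq0.
by rewrite big_ord_recr /= IHM exprS; field.
Qed.

Lemma grid_cell (k : nat) (delta t : R) : 0 < delta -> 0 <= t <= k.+1%:R * delta ->
  exists idx : 'I_k.+1, idx%:R * delta <= t <= idx%:R * delta + delta.
Proof.
move=> delta_gt0 /andP[t_ge0 t_le].
have z_ge0 : 0 <= t / delta by rewrite divr_ge0 // ltW.
have z_le : t / delta <= k.+1%:R by rewrite ler_pdivrMr.
pose idx := minn (Num.truncn (t / delta)) k.
have : idx%:R <= t / delta <= idx%:R + 1.
  have [le_zk|lt_kz] := leqP (Num.truncn (t / delta)) k.
    rewrite /idx (minn_idPl le_zk) natr1.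
    by have /andP[-> /ltW ->] := truncn_itv z_ge0.
  rewrite /idx (minn_idPr (ltnW lt_kz)) natr1 z_le andbT.
  by move: lt_kz; rewrite truncn_gt_nat; apply: le_trans; rewrite ler_nat.
rewrite ler_pdivlMr // ler_pdivrMr // mulrDl mul1r => idx_spec.
by exists (inord idx); rewrite inordK // ltnS geq_minr.
Qed.

End RealSums.

Section LebesgueNull.
Variables (R : realType) (n : nat).
Implicit Types N : set ('I_n -> R).

Lemma lebesgue_nullS N N' : N `<=` N' -> lebesgue_null N' -> lebesgue_null N.
Proof.
move=> sub_N N'_null eps /N'_null[l [u [le_lu [cov vol]]]].
by exists l, u; do !split=> //; move=> x /sub_N; exact: cov.
Qed.

Lemma lebesgue_null_finite_cover N : (0 < n)%N ->
  (forall eps : R, 0 < eps -> exists (I : finType) (l u : I -> 'I_n -> R),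
     [/\ forall k i, l k i <= u k i,
         forall x, N x -> exists k, forall i, l k i <= x i <= u k i
       & \sum_k \prod_(i < n) (u k i - l k i) <= eps]) ->
  lebesgue_null N.
Proof.
move=> n_gt0 fin_cover eps /fin_cover[I [l [u [le_lu cov vol_le]]]].
(* Indices beyond [#|I|] get a degenerate box, of volume [0] only because [0 < n]. *)
pose pad (w : I -> 'I_n -> R) m i :=
  if insub m : option 'I_#|I| is Some o then w (enum_val o) i else 0.
exists (pad l), (pad u); split; [|split].
- by move=> m i; rewrite /pad; case: insub.
- move=> x /cov[k xk]; exists (enum_rank k : nat) => i.
  by rewrite /pad valK enum_rankK; exact: xk.
- move=> M; apply: le_trans vol_le.
  pose vol m := \prod_(i < n) (pad u m i - pad l m i).
  apply: le_trans (ler_sum_ord_supp (F := vol) (C := #|I|) M _ _) _.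
  + move=> m; apply: prodr_ge0 => i _; rewrite subr_ge0 /pad.
    by case: insub.
  + move=> m le_Im; rewrite /vol /pad insubN -?leqNgt //.
    by rewrite prodr_const subrr expr0n card_ord (gtn_eqF n_gt0).
  rewrite (reindex (@enum_val I predT)) /=; last first.
    by exists enum_rank => [o|k] _; rewrite ?enum_valK ?enum_rankK.
  by under eq_bigr do rewrite /vol /pad valK.
Qed.

Lemma lebesgue_null0 : (0 < n)%N -> lebesgue_null (@set0 ('I_n -> R)).
Proof.
move=> n_gt0; apply: lebesgue_null_finite_cover => // eps eps_gt0.
exists 'I_0, (fun _ _ => 0), (fun _ _ => 0).
by split=> [//|x []|]; rewrite big_ord0 ltW.
Qed.

Lemma lebesgue_null_bigcup_nat (P : nat -> set ('I_n -> R)) :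
  (forall p, lebesgue_null (P p)) -> lebesgue_null (\bigcup_p P p).
Proof.
move=> P_null eps eps_gt0.
have eps_p_gt0 p : 0 < eps / 2 ^+ p.+1 by rewrite divr_gt0 // exprn_gt0.
have /choice[cov cov_spec] p : exists lu : (nat -> 'I_n -> R) * (nat -> 'I_n -> R),
    [/\ forall m i, lu.1 m i <= lu.2 m i,
        forall x, P p x -> exists m, forall i, lu.1 m i <= x i <= lu.2 m i
      & forall M, \sum_(m < M) \prod_(i < n) (lu.2 m i - lu.1 m i) <= eps / 2 ^+ p.+1].
  by have [l [u [? [? ?]]]] := P_null p _ (eps_p_gt0 p); exists (l, u).
pose vol z := \prod_(i < n) ((cov z.1).2 z.2 i - (cov z.1).1 z.2 i).
exists (fun m => (cov (of_nat m).1).1 (of_nat m).2).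
exists (fun m => (cov (of_nat m).1).2 (of_nat m).2); split; [|split].
- by move=> m i; case: (cov_spec (of_nat m).1).
- move=> x [p _ Ppx]; have [_ /(_ x Ppx)[q xq] _] := cov_spec p.
  by exists (to_nat (p, q)); rewrite cancel_of_to.
- move=> M; rewrite -(big_mkord xpredT (vol \o of_nat)).
  apply: le_trans (sum_cantor_le M (F := vol) _) _.
    move=> z; apply: prodr_ge0 => i _; rewrite subr_ge0.
    by case: (cov_spec z.1).
  apply: (@le_trans _ _ (\sum_(0 <= p < M) eps / 2 ^+ p.+1)).
    by apply: ler_sum_nat => p _; rewrite big_mkord; case: (cov_spec p).
  rewrite big_mkord -mulr_sumr sum_inv_pow2 ger_pMr // lerBlDr lerDl invr_ge0.
  by rewrite exprn_ge0.
Qed.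

Lemma lebesgue_null_bigcup (I : countType) (P : I -> set ('I_n -> R)) : (0 < n)%N ->
  (forall i, lebesgue_null (P i)) -> lebesgue_null (\bigcup_i P i).
Proof.
move=> n_gt0 P_null.
pose Q p := if pickle_inv p is Some i then P i else set0.
apply: (@lebesgue_nullS _ (\bigcup_p Q p)).
  by move=> x [i _ Pix]; exists (pickle i) => //; rewrite /Q pickleK_inv.
apply: lebesgue_null_bigcup_nat => p; rewrite /Q.
by case: pickle_inv => [i|]; [exact: P_null|exact: lebesgue_null0].
Qed.

Lemma hyperplane_coord_near (c x y : 'I_n -> R) (j : 'I_n) (d : R) :
  c j != 0 -> \sum_i c i * x i = 0 -> (forall i, y i <= x i <= y i + d) ->
  `|x j + (\sum_(i | i != j) c i * y i) / c j|
    <= (\sum_(i | i != j) `|c i|) / `|c j| * d.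
Proof.
move=> cj_neq0 hyp near_xy; rewrite (bigD1 j) //= in hyp.
set Sx := \sum_(i | i != j) c i * x i in hyp; set Sy := \sum_(i | i != j) _.
have cxj : c j * x j = - Sx by apply/eqP; rewrite -addr_eq0 hyp.
have -> : x j + Sy / c j = - (Sx - Sy) / c j.
  by rewrite -[x j](mulKf cj_neq0) cxj; ring.
rewrite normrM normrN normfV mulrAC ler_wpM2r ?invr_ge0 // mulr_suml /Sx /Sy -sumrB.
apply: le_trans (ler_norm_sum _ _ _) _; apply: ler_sum => i _.
rewrite -mulrBr normrM ler_wpM2l // ler_norml.
by have /andP[] := near_xy i; lra.
Qed.

Lemma lebesgue_null_hyperplane_box (c : 'I_n -> R) (j : 'I_n) (B : R) :
  c j != 0 -> 0 < B ->
  lebesgue_null [set x | (forall i, 0 <= x i <= B) /\ \sum_i c i * x i = 0].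
Proof.
move=> cj_neq0 B_gt0.
apply: lebesgue_null_finite_cover => [|eps eps_gt0]; first exact: leq_ltn_trans (ltn_ord j).
(* Grid cells of side [d] in the directions [i != j]; in direction [j] the point is
   within [(L - 1) * d] of [g f], and this window is cut into [K] slices of width
   [d * q].  The [K ^ n] boxes have total volume [K ^ n * d ^ n * q = 2 * L * B ^ n / K]. *)
pose L := (\sum_(i | i != j) `|c i|) / `|c j| + 1.
have L_gt0 : 0 < L by rewrite ltr_wpDl // divr_ge0 // sumr_ge0.
pose k := Num.truncn (2 * L * B ^+ n / eps); pose K := k.+1.
pose d := B / K%:R; pose q := 2 * L / K%:R.
have d_gt0 : 0 < d by rewrite divr_gt0.
have dq_gt0 : 0 < d * q by rewrite mulr_gt0 // divr_gt0 // mulr_gt0.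
pose g (f : 'I_n -> 'I_K) := - (\sum_(i | i != j) c i * ((f i)%:R * d)) / c j.
pose l (f : {ffun 'I_n -> 'I_K}) i :=
  if i == j then g f - L * d + (f j)%:R * (d * q) else (f i)%:R * d.
pose w i := d * (if i == j then q else 1).
have w_ge0 i : 0 <= w i by rewrite /w; case: ifP => _; rewrite ltW // mulr1.
exists {ffun 'I_n -> 'I_K}, l, (fun f i => l f i + w i); split.
- by move=> f i; rewrite lerDl.
- move=> x [x_box x_hyp].
  have /fin_all_exists[f0 f0_spec] i : exists idx : 'I_K,
      idx%:R * d <= x i <= idx%:R * d + d.
    by apply: grid_cell; rewrite // mulrC divfK ?gt_eqF //; exact: x_box.
  have : `|x j - g f0| <= (L - 1) * d.
    by rewrite /g mulNr opprK /L addrK; exact: hyperplane_coord_near.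
  rewrite ler_norml => /andP[near_lo near_hi].
  have [idx idx_spec] : exists idx : 'I_K,
      idx%:R * (d * q) <= x j - (g f0 - L * d) <= idx%:R * (d * q) + d * q.
    apply: grid_cell => //.
    have -> : k.+1%:R * (d * q) = 2 * L * d.
      by rewrite /q /K; field; rewrite nat1r pnatr_eq0.
    by apply/andP; split; nra.
  exists [ffun i => if i == j then idx else f0 i] => i.
  have g_eq : g [ffun i => if i == j then idx else f0 i] = g f0.
    by congr (- _ / _); apply: eq_bigr => i' /negbTE ij; rewrite ffunE ij.
  rewrite /l /w g_eq !ffunE; case: eqP => [->|_]; last by rewrite mulr1; exact: f0_spec.
  by rewrite eqxx; move: idx_spec => /andP[lo hi]; apply/andP; split; lra.
- under eq_bigr do under eq_bigr do rewrite addrC addKr.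
  rewrite sumr_const card_ffun !card_ord /w big_split /= prodr_const card_ord.
  rewrite -big_mkcond big_pred1_eq.
  rewrite -mulr_natr natrX mulrAC -exprMn /d divfK ?gt_eqF // /q mulrA ler_pdivrMr //.
  have : 2 * L * B ^+ n < K%:R * eps by rewrite -ltr_pdivrMr // truncnS_gt.
  by rewrite mulrC [eps * _]mulrC mulrA => /ltW.
Qed.

Lemma lebesgue_null_int_hyperplanes : (0 < n)%N ->
  lebesgue_null [set x : 'I_n -> R | (forall i, 0 <= x i) /\
    exists2 c : 'I_n -> int, (exists j, c j != 0) & \sum_i (c i)%:~R * x i = 0].
Proof.
move=> n_gt0.
pose piece (cB : {ffun 'I_n -> int} * nat) := [set x : 'I_n -> R |
  [/\ forall i, 0 <= x i <= cB.2.+1%:R, exists j, cB.1 j != 0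
    & \sum_i (cB.1 i)%:~R * x i = 0]].
apply: (lebesgue_nullS _ (lebesgue_null_bigcup (P := piece) n_gt0 _)).
  move=> x [x_ge0 [c [j cj_neq0] x_hyp]].
  exists ([ffun i => c i], Num.truncn (\sum_i x i)) => //; split.
  - move=> i; rewrite x_ge0 /=; apply: le_trans (ltW (truncnS_gt _)).
    by rewrite (bigD1 i) //= lerDl sumr_ge0.
  - by exists j; rewrite ffunE.
  - by rewrite -[RHS]x_hyp; apply: eq_bigr => i _; rewrite ffunE.
move=> [c B]; have [[j cj_neq0]|no_j] := pselect (exists j, c j != 0); last first.
  by apply: (lebesgue_nullS _ (lebesgue_null0 n_gt0)) => x [_ /no_j].
have cRj_neq0 : (c j)%:~R != 0 :> R by rewrite intr_eq0.
apply: (lebesgue_nullS _ (lebesgue_null_hyperplane_box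
  (c := fun i => (c i)%:~R) cRj_neq0 (ltr0Sn _ B))).
by move=> x [x_box _ x_hyp]; split.
Qed.

End LebesgueNull.

Theorem lemma4p2 (R : realType) (a b : nat) (ha : (1 <= a)%N) (hb : (1 <= b)%N) :
  lebesgue_null
    (fun x : 'I_(a + b) -> R =>
       Lambda x /\
       ~ (exists y : 'I_(a + b) -> R,
            (forall i, (fun k : nat => iter k (@Tab R a b) x i) @ \oo --> y i) /\
            (forall i : 'I_(a + b), (i <= a)%N -> y i = 0))).
Proof.
have u_lt : (a.-1 < a + b)%N by lia.
have v_lt : (a < a + b)%N by lia.
pose u := Ordinal u_lt; pose v := Ordinal v_lt.
apply: (lebesgue_nullS _ (lebesgue_null_int_hyperplanes _)); last lia.
move=> x [x_Lambda no_limit]; split; first by case: x_Lambda.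
have [k pivot0] : exists k, iter k (@Tab R a b) x u = 0.
  apply: contrapT => no_zero; apply: no_limit.
  apply: (@cvg_iter_Tab _ _ _ u v) => // k; apply/eqP => pivot0.
  by apply: no_zero; exists k.
have [M M_unit Xk] := @iter_Tab_intmx _ _ _ u (erefl _) ha x k.
exists (fun j => M u j); first exact: unitmx_row_neq0.
by rewrite -[RHS]pivot0 Xk.
Qed.
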